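(* Let $\eta>1$ and $\epsilon>0$. If a distribution $\mu$ over $\{-1,+1\}^n$ is $(\eta,\epsilon)$-completely spectrally independent, then for every $0<\alpha\le1/(2\eta)$ and every $x\in\left(0,(1+\epsilon)^{1/\alpha}\right]^n$ we have $F_{\mu,\alpha}(x)\le1$, where $$F_{\mu,\alpha}(z_1,\dots,z_n)=\frac{g_\mu(z_1^\alpha,\dots,z_n^\alpha)^{1/\alpha}}{\prod_{i=1}^n(\mu_i(+1)z_i+\mu_i(-1))}.$$
   Context: $g_\mu(z)=\sum_{\sigma\in\{-1,+1\}^n}\mu(\sigma)\prod_{i:\sigma_i=+1}z_i$; $\mu_i$ is the marginal at coordinate $i$. $(\boldsymbol\lambda*\mu)(\sigma)\propto\mu(\sigma)\prod_{i:\sigma_i=+1}\lambda_i$. $\mu$ is $(\eta,\epsilon)$-completely spectrally independent if $(\boldsymbol\lambda*\mu)$ is $\eta$-spectrally independent for every $\boldsymbol\lambda\in(0,1+\epsilon]^n$. A distribution $\nu$ is $\eta$-spectrally independent if for every $\Lambda\subseteq[n]$ and every $\sigma$ in the support of the marginal $\nu_\Lambda$, the spectral radius of the matrix $\Psi_{\nu^\sigma}(i,j)=\max_{x,y}d_{\mathrm{TV}}(\nu_j^{\sigma\wedge i\gets x},\nu_j^{\sigma\wedge i\gets y})$ (max over $x,y$ in the support of $\nu^\sigma_i$) is at most $\eta$; here $\nu^\sigma$ is $\nu$ conditioned on $\sigma$ and $\nu^{\sigma\wedge i\gets x}$ is further conditioned on coordinate $i$ equal to $x$. *)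

From HB Require Import structures.
From mathcomp Require Import all_boot all_order all_algebra.
From mathcomp Require Import complex.
From mathcomp Require Import all_classical all_reals all_analysis.
Set Implicit Arguments. Unset Strict Implicit. Unset Printing Implicit Defensive.
Import Order.TTheory GRing.Theory Num.Theory.
Local Open Scope classical_set_scope.
Local Open Scope ring_scope.

(* The hypercube {-1,+1}^n; a configuration s assigns the boolean
   (true <-> +1, false <-> -1) s i to coordinate i. *)
Definition cube (n : nat) := {ffun 'I_n -> bool}.

Section Defs.
Variables (R : realType) (n : nat).

Definition is_distribution (mu : cube n -> R) : Prop :=
  (forall s, 0 <= mu s) /\ \sum_(s : cube n) mu s = 1.

Definition gen_poly (mu : cube n -> R) (z : 'I_n -> R) : R :=
  \sum_(s : cube n) mu s * \prod_(i < n | s i) z i.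

Definition prob (mu : cube n -> R) (P : pred (cube n)) : R :=
  \sum_(s : cube n | P s) mu s.

Definition marginal (mu : cube n -> R) (i : 'I_n) (b : bool) : R :=
  prob mu (fun s => s i == b).

Definition tilt (lam : 'I_n -> R) (mu : cube n -> R) : cube n -> R :=
  fun s => mu s * \prod_(i < n | s i) lam i / gen_poly mu lam.

Definition agree (L : {set 'I_n}) (t : cube n) : pred (cube n) :=
  fun s => [forall i in L, s i == t i].

Definition cond_marginal (mu : cube n -> R) (P : pred (cube n)) (j : 'I_n)
  (b : bool) : R :=
  prob mu (fun s => P s && (s j == b)) / prob mu P.

Definition dTV (p q : bool -> R) : R := 2^-1 * \sum_(b : bool) `|p b - q b|.

Definition pin (L : {set 'I_n}) (t : cube n) (i : 'I_n) (x : bool) : pred (cube n) :=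
  fun s => agree L t s && (s i == x).

Definition influence (nu : cube n -> R) (L : {set 'I_n}) (t : cube n) : 'M[R]_n :=
  \matrix_(i < n, j < n)
    \big[Num.max/0]_(x : bool | 0 < prob nu (pin L t i x))
      \big[Num.max/0]_(y : bool | 0 < prob nu (pin L t i y))
        dTV (cond_marginal nu (pin L t i x) j) (cond_marginal nu (pin L t i y) j).

Definition spectral_radius (A : 'M[R]_n) : R :=
  sup [set ComplexField.Normc.normc l | l in [set l : R[i] | eigenvalue (map_mx (fun r => r%:C%C) A) l]].

Definition spectrally_independent (nu : cube n -> R) (eta : R) : Prop :=
  forall (L : {set 'I_n}) (t : cube n), 0 < prob nu (agree L t) ->
    spectral_radius (influence nu L t) <= eta.

Definition completely_spectrally_independent (mu : cube n -> R) (eta eps : R) : Prop :=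
  forall lam : 'I_n -> R, (forall i, 0 < lam i <= 1 + eps) ->
    spectrally_independent (tilt lam mu) eta.

Definition F_fun (mu : cube n -> R) (alpha : R) (z : 'I_n -> R) : R :=
  (gen_poly mu (fun i => z i `^ alpha)) `^ (alpha^-1)
  / \prod_(i < n) (marginal mu i true * z i + marginal mu i false).

End Defs.

(* Fix [x] and put [c_i = mu_i(+1) x_i + mu_i(-1)], [a_i(+1) = x_i / c_i - 1],
   [a_i(-1) = 1 / c_i - 1], so that [a_i(sigma_i)] is centred under [mu].  Along
     Z(t) = sum_sigma mu(sigma) prod_i (1 + t a_i(sigma_i))^alpha,   t in [0, 1],
   we have [Z(0) = 1] and [Z(1) = F_{mu,alpha}(x)^alpha].  Up to normalisation the
   summands of [Z(t)] are the tilt of [mu] by an external field in [(0, 1 + eps]^n],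
   and [Z'(t) = alpha Z(t) E_t[X_t]] with [X_t = sum_i a_i / (1 + t a_i)].  The mean
   [E_t[X_t]] vanishes at [t = 0] and has derivative
   [alpha Var_t(X_t) - E_t[sum_i (a_i / (1 + t a_i))^2] <= 0]: the influence matrix
   [Psi] of the tilted measure has spectral radius at most [eta < 1 / alpha], hence a
   positive [v] with [Psi v <= v / alpha], and Schur's test together with
   [|Cov(sigma_i, sigma_j)| <= Var(sigma_i) Psi(i, j)] bounds the variance of a sum
   of single-site functions by [1 / alpha] times the sum of their second moments.
   Hence [Z] is nonincreasing and [F_{mu,alpha}(x) <= 1]. *)

From HB Require Import structures.
From mathcomp Require Import all_boot all_order all_algebra.
From mathcomp Require Import complex.
From mathcomp Require Import all_classical all_reals all_analysis.
From mathcomp Require Import ring lra.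
Set Implicit Arguments. Unset Strict Implicit. Unset Printing Implicit Defensive.
Import Order.TTheory GRing.Theory Num.Theory numFieldNormedType.Exports.
Local Open Scope ring_scope.

Section RealAux.
Variable R : realType.

Lemma is_derive_le0_nincr (f df : R -> R) (a b : R) :
  (forall x, a <= x <= b -> is_derive x 1 f (df x)) ->
  (forall x, a <= x <= b -> df x <= 0) ->
  forall x y, a <= x -> x <= y -> y <= b -> f y <= f x.
Proof.
move=> fdf dfle0 x y ax xy yb.
have inab z : z \in `]a, b[ -> a <= z <= b.
  by rewrite in_itv /= => /andP[/ltW -> /ltW ->].
apply: (@ler0_derive1_le_cc _ f a b) => //; rewrite ?in_itv /= ?ax ?yb ?andbT.
- by move=> z /inab zab; have [] := fdf z zab.
- by move=> z /inab zab; rewrite derive1E; have [_ ->] := fdf z zab; exact: dfle0.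
- apply: derivable_within_continuous => z; rewrite in_itv /= => zab.
  by have [] := fdf z zab.
- exact: le_trans ax xy.
- exact: le_trans xy yb.
Qed.

Lemma is_derive_sum_fin (S : finType) (f : S -> R -> R) (df : S -> R) (x : R) :
  (forall s, is_derive x 1 (f s) (df s)) ->
  is_derive x 1 (fun t => \sum_s f s t) (\sum_s df s).
Proof.
move=> fdf; have -> : (fun t => \sum_s f s t) = \sum_s f s.
  by apply/funext => t; rewrite fct_sumE.
by elim/big_ind2 : _ => // *; [exact: is_derive_cst | exact: is_deriveD].
Qed.

Lemma weight_gt0 (c t : R) : -1 < c -> 0 <= t <= 1 -> 0 < 1 + t * c.
Proof.
move=> c_gtN1 /andP[t0 t1].
have -> : 1 + t * c = (1 - t) + t * (1 + c) by ring.
have [->|t_ne0] := eqVneq t 0; first by rewrite subr0 mul0r addr0.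
have t_gt0 : 0 < t by rewrite lt_neqAle eq_sym t_ne0.
by apply: ltr_pwDr; [rewrite mulr_gt0 //; lra | lra].
Qed.

End RealAux.

Section Path.
Variables (R : realType) (S : finType) (n : nat).
Variables (m : S -> R) (a : S -> 'I_n -> R) (al : R).
Hypotheses (m_ge0 : forall s, 0 <= m s) (m_sum_gt0 : 0 < \sum_s m s).
Hypotheses (al_gt0 : 0 < al) (a_gtN1 : forall s i, -1 < a s i).

Definition path_term s t := expR (al * \sum_i ln (1 + t * a s i)).
Definition path_score s t := \sum_i a s i / (1 + t * a s i).
Definition path_score2 s t := \sum_i (a s i / (1 + t * a s i)) ^+ 2.
Definition path_Z t := \sum_s m s * path_term s t.
Definition path_N t := \sum_s m s * (path_term s t * path_score s t).
Definition path_M t := \sum_s m s * (path_term s t * path_score s t ^+ 2).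
Definition path_V t := \sum_s m s * (path_term s t * path_score2 s t).

Section AtTime.
Variable t : R.
Hypothesis t01 : 0 <= t <= 1.

Lemma is_derive_path_weight s i : is_derive t 1 (fun u => 1 + u * a s i) (a s i).
Proof.
by apply: is_derive_eq; rewrite add0r mul1r scaler0 add0r /GRing.scale /= mulr1.
Qed.

Lemma is_derive_path_term s :
  is_derive t 1 (path_term s) (path_term s t * (al * path_score s t)).
Proof.
have dlog : is_derive t 1 (fun u => al * \sum_i ln (1 + u * a s i)) (al * path_score s t).
  apply: is_deriveZ; apply: is_derive_sum_fin => i.
  have := @is_derive1_comp _ (@ln R) _ t _ _ (is_derive1_ln (weight_gt0 (a_gtN1 s i) t01))
    (is_derive_path_weight s i).
  by rewrite mulrC.
exact: @is_derive1_comp _ (@expR R) _ t _ _ (is_derive_expR _) dlog.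
Qed.

Lemma is_derive_path_score s : is_derive t 1 (path_score s) (- path_score2 s t).
Proof.
rewrite /path_score2 -sumrN; apply: is_derive_sum_fin => i.
have w_neq0 := lt0r_neq0 (weight_gt0 (a_gtN1 s i) t01).
have := is_deriveZ (a s i)
  (@is_deriveV R (fun u => 1 + u * a s i) t _ 1 w_neq0 (is_derive_path_weight s i)).
by move=> /is_derive_eq; apply; rewrite /GRing.scale /=; field.
Qed.

Lemma is_derive_path_Z : is_derive t 1 path_Z (al * path_N t).
Proof.
rewrite /path_N mulr_sumr; apply: is_derive_sum_fin => s.
have := is_deriveZ (m s) (is_derive_path_term s).
by move=> /is_derive_eq; apply; rewrite /GRing.scale /=; ring.
Qed.

Lemma is_derive_path_N : is_derive t 1 path_N (al * path_M t - path_V t).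
Proof.
rewrite /path_M /path_V mulr_sumr -sumrB; apply: is_derive_sum_fin => s.
have := is_deriveZ (m s) (is_deriveM (is_derive_path_term s) (is_derive_path_score s)).
by move=> /is_derive_eq; apply; rewrite /GRing.scale /=; ring.
Qed.

End AtTime.

Lemma path_Z_gt0 t : 0 < path_Z t.
Proof.
have term_gt0 s : 0 < path_term s t by exact: expR_gt0.
have [[s0 ms0]|no_pos] := pselect (exists s, 0 < m s).
  rewrite /path_Z (bigD1 s0) //=; apply: ltr_wpDr; last exact: mulr_gt0.
  by apply: sumr_ge0 => s _; rewrite mulr_ge0 // ltW.
have : \sum_s m s <= 0.
  by apply: sumr_le0 => s _; rewrite leNgt; apply/negP => ms; apply: no_pos; exists s.
by move/(lt_le_trans m_sum_gt0); rewrite ltxx.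
Qed.

Lemma path_N0 : path_N 0 = \sum_s m s * \sum_i a s i.
Proof.
apply: eq_bigr => s _; rewrite /path_term /path_score.
under eq_bigr do rewrite mul0r addr0 ln1.
under [X in _ * (_ * X)]eq_bigr do rewrite mul0r addr0 divr1.
by rewrite big1 // mulr0 expR0 mul1r.
Qed.

Section Monotonicity.
Hypothesis centred : \sum_s m s * \sum_i a s i <= 0.
Hypothesis variance_bound : forall t, 0 <= t <= 1 ->
  al * (path_M t * path_Z t - path_N t ^+ 2) <= path_V t * path_Z t.

(* [path_N / path_Z] is the mean of the score under the tilted measure; its
   derivative is [al * Var - E[score2]], which the variance bound makes nonpositive. *)
Lemma path_N_le0 t : 0 <= t <= 1 -> path_N t <= 0.
Proof.
move=> /andP[t0 t1].
pose Q u := path_N u * (path_Z u)^-1.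
pose dQ u := (path_N u * (- (path_Z u) ^- 2 * (al * path_N u))
              + (path_Z u)^-1 * (al * path_M u - path_V u)).
have Qder (u : R) : 0 <= u <= 1 -> is_derive u 1 Q (dQ u).
  move=> u01; have := is_deriveM (is_derive_path_N u01)
    (@is_deriveV R path_Z u _ 1 (lt0r_neq0 (path_Z_gt0 u)) (is_derive_path_Z u01)).
  by move=> /is_derive_eq; apply; rewrite /GRing.scale /=.
have dQ_le0 (u : R) : 0 <= u <= 1 -> dQ u <= 0.
  move=> u01; have Zu := path_Z_gt0 u.
  have -> : dQ u = ((al * path_M u - path_V u) * path_Z u - al * path_N u ^+ 2)
                   / path_Z u ^+ 2 by rewrite /dQ; field; rewrite gt_eqF.
  rewrite pmulr_lle0 ?invr_gt0 ?exprn_gt0 //.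
  by have := variance_bound u01; lra.
have := is_derive_le0_nincr Qder dQ_le0 (lexx 0) t0 t1.
rewrite /Q path_N0 => QtleQ0.
have Zt := path_Z_gt0 t; have Z0 := path_Z_gt0 0.
have : Q t <= 0 by apply: le_trans QtleQ0 _; rewrite pmulr_lle0 ?invr_gt0.
by rewrite /Q pmulr_lle0 ?invr_gt0.
Qed.

Lemma path_Z_nincr : path_Z 1 <= path_Z 0.
Proof.
have Zder (u : R) : 0 <= u <= 1 -> is_derive u 1 path_Z (al * path_N u).
  exact: is_derive_path_Z.
have dZ_le0 (u : R) : 0 <= u <= 1 -> al * path_N u <= 0.
  by move=> u01; rewrite pmulr_rle0 // path_N_le0.
exact: (@is_derive_le0_nincr R path_Z (fun u => al * path_N u) 0 1 Zder dZ_le0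
  0 1 (lexx 0) ler01 (lexx 1)).
Qed.

End Monotonicity.

End Path.

Section ZMatrix.
Variables (R : realFieldType) (n : nat).

Lemma zmatrix_sol_ge0 (B : 'M[R]_n) (v g : 'I_n -> R) :
  (forall i j, i != j -> B i j <= 0) -> (forall i, 0 < v i) ->
  (forall i, 0 < \sum_j B i j * v j) -> (forall i, 0 <= \sum_j B i j * g j) ->
  forall i, 0 <= g i.
Proof.
move=> Boff vpos Bv Bg i0.
have [k _ kmin] := @arg_minP _ _ 'I_n i0 xpredT (fun k => g k / v k) isT.
set r := g k / v k in kmin.
suff r0 : 0 <= r.
  by have := kmin i0 isT => /(le_trans r0); rewrite pmulr_lge0 // invr_gt0.
(* at the index of the smallest ratio g/v, the row of [B g] would be negative *)
rewrite leNgt; apply/negP => rlt0.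
have : \sum_j B k j * g j <= r * \sum_j B k j * v j.
  rewrite mulr_sumr; apply: ler_sum => j _.
  have [->|jk] := eqVneq j k; first by rewrite /r mulrCA divfK // gt_eqF.
  rewrite mulrCA; apply: ler_wnM2l; first by apply: Boff; rewrite eq_sym.
  by have := kmin j isT; rewrite ler_pdivlMr.
have := Bg k; have : r * \sum_j B k j * v j < 0 by rewrite nmulr_rlt0.
lra.
Qed.

Lemma row_shiftE (A : 'M[R]_n) (t : R) (v : 'I_n -> R) i :
  \sum_j (t%:M - A) i j * v j = t * v i - \sum_j A i j * v j.
Proof.
under eq_bigr do rewrite !mxE mulrBl.
rewrite sumrB (bigD1 i) //= eqxx mulr1n big1 ?addr0 // => j /negbTE.
by rewrite eq_sym => ->; rewrite mulr0n mul0r.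
Qed.

End ZMatrix.

Section Resolvent.
Variables (R : realType) (n : nat) (A : 'M[R]_n).
Hypothesis A_ge0 : forall i j, 0 <= A i j.

(* [(t - A)^-1 1], by Cramer's rule *)
Definition resolvent1 (t : R) i := (\sum_j \adj (t%:M - A) i j) / \det (t%:M - A).

Definition supersolution (t : R) (v : 'I_n -> R) :=
  (forall i, 0 < v i) /\ (forall i, \sum_j A i j * v j < t * v i).

Lemma resolvent1P t : \det (t%:M - A) != 0 ->
  forall i, t * resolvent1 t i - \sum_j A i j * resolvent1 t j = 1.
Proof.
move=> det0 i; rewrite -row_shiftE /resolvent1.
under eq_bigr do rewrite mulrA mulr_sumr.
rewrite -mulr_suml exchange_big /=.
transitivity ((\sum_k ((t%:M - A) *m \adj (t%:M - A)) i k) / \det (t%:M - A)).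
  by congr (_ * _); apply: eq_bigr => k _; rewrite mxE.
rewrite mul_mx_adj (bigD1 i) //= mxE eqxx mulr1n big1 ?addr0 ?divff // => k /negbTE.
by rewrite mxE eq_sym => ->.
Qed.

Lemma horner_char_poly_mx t : map_mx (horner_eval t) (char_poly_mx A) = t%:M - A.
Proof.
apply/matrixP => i j; rewrite !mxE /= horner_evalE.
by rewrite hornerD hornerN hornerMn hornerX hornerC.
Qed.

Lemma horner_char_poly t : (char_poly A).[t] = \det (t%:M - A).
Proof. by rewrite -horner_char_poly_mx det_map_mx. Qed.

Lemma continuous_resolvent1 t i : \det (t%:M - A) != 0 ->
  {for t, continuous (resolvent1^~ i)}.
Proof.
move=> det0.
have -> : resolvent1^~ i = (fun s => (\sum_j \adj (char_poly_mx A) i j).[s])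
                           \* (fun s => ((char_poly A).[s])^-1).
  apply/funext => s /=; rewrite /resolvent1 horner_char_poly horner_sum.
  congr (_ / _); apply: eq_bigr => j _.
  by rewrite -horner_char_poly_mx -map_mx_adj mxE.
apply: continuousM; first exact: continuous_horner.
by apply: continuousV; [rewrite horner_char_poly | exact: continuous_horner].
Qed.

Lemma supersolution_resolvent1_ge0 t v : \det (t%:M - A) != 0 ->
  supersolution t v -> forall i, 0 <= resolvent1 t i.
Proof.
move=> det0 [vpos Av]; apply: (@zmatrix_sol_ge0 _ _ (t%:M - A) v).
- by move=> i j ij; rewrite !mxE (negbTE ij) mulr0n sub0r oppr_le0.
- exact: vpos.
- by move=> i; rewrite row_shiftE subr_gt0.
- by move=> i; rewrite row_shiftE resolvent1P.
Qed.

Lemma resolvent1_supersolution t : \det (t%:M - A) != 0 ->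
  (forall i, 0 <= resolvent1 t i) ->
  exists2 d, 0 < d & forall t', t - d < t' -> supersolution t' (resolvent1 t).
Proof.
move=> det0 w_ge0; pose w := resolvent1 t.
have Ew i : t * w i - \sum_j A i j * w j = 1 := resolvent1P det0 i.
have w_gt0 i : 0 < w i.
  have Aw_ge0 : 0 <= \sum_j A i j * w j by apply: sumr_ge0 => j _; apply: mulr_ge0.
  rewrite lt_neqAle w_ge0 andbT; apply/negP => /eqP w0.
  by have := Ew i; rewrite -w0 mulr0; lra.
pose W := \sum_i w i.
have wW i : w i <= W by rewrite /W (bigD1 i) //= lerDl sumr_ge0.
have W_ge0 : 0 <= W by apply: sumr_ge0.
(* [(t' - A) w = 1 + (t' - t) w > 1 - d W = d] for [d = 1 / (1 + W)] *)
exists (1 + W)^-1; first by rewrite invr_gt0; lra.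
move=> t' tt'; split => // i; change (\sum_j A i j * w j < t' * w i).
set d := (1 + W)^-1 in tt' *.
have d_gt0 : 0 < d by rewrite invr_gt0; lra.
have dW : d + d * W = 1 by rewrite -[X in X + _]mulr1 -mulrDr mulVf // gt_eqF //; lra.
have : 0 < (t' - t + d) * w i by apply: mulr_gt0 => //; lra.
have : d * w i <= d * W by rewrite ler_wpM2l // ltW.
have := Ew i; rewrite !mulrDl mulNr; lra.
Qed.

Lemma supersolution_large : exists t, supersolution t (fun=> 1).
Proof.
exists (1 + \sum_i \sum_j A i j); split => // i.
rewrite mulr1; under eq_bigr do rewrite mulr1.
have : \sum_j A i j <= \sum_k \sum_j A k j.
  by rewrite [leRHS](bigD1 i) //= lerDl; do 2!apply: sumr_ge0 => ? _.
lra.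
Qed.

Lemma supersolution_mono t t' v : t <= t' -> supersolution t v -> supersolution t' v.
Proof.
move=> tt' [vpos Av]; split => // i.
by apply: lt_le_trans (Av i) _; rewrite ler_wpM2r // ltW.
Qed.

(* Let [ts] be the infimum of the [t >= c] admitting a strict supersolution.
   For those [t], [resolvent1 t >= 0], hence [resolvent1 ts >= 0] by continuity;
   then [resolvent1 ts] is a strict supersolution on a neighbourhood of [ts],
   which forces [ts = c]. *)
Lemma nonneg_mx_subeigenvector (c : R) :
  (forall t, c <= t -> \det (t%:M - A) != 0) ->
  exists2 v : 'I_n -> R, forall i, 0 < v i & forall i, \sum_j A i j * v j <= c * v i.
Proof.
move=> det0.
pose T : set R := [set t | c <= t /\ exists v, supersolution t v]%classic.
have [t1 sup1] := supersolution_large.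
have Tt1 : T (Num.max c t1).
  split; first by rewrite le_max lexx.
  by exists (fun=> 1); apply: supersolution_mono sup1; rewrite le_max lexx orbT.
have T_lb : lbound T c by move=> t [].
have infT : has_inf T by split; [exists (Num.max c t1) | exists c].
pose ts := inf T.
have c_le_ts : c <= ts := lb_le_inf infT.1 T_lb.
have res_ge0 i : 0 <= resolvent1 ts i.
  rewrite leNgt; apply/negP => neg.
  have := cvgr_lt _ (@continuous_resolvent1 ts i (det0 _ c_le_ts)) _ neg.
  move=> /(_ (nbhs_filter ts)) /(nbhs_ballP _ _).1 [d d0 near_neg].
  have [t [ct [v supv]] tlt] := inf_adherent d0 infT.
  have ts_le_t : ts <= t by apply: (ge_inf infT.2); split => //; exists v.
  have /near_neg : ball ts d t by rewrite /ball /= distrC ger0_norm ?subr_ge0 //; lra.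
  by have := supersolution_resolvent1_ge0 (det0 _ ct) supv i; lra.
have [d d0 supd] := resolvent1_supersolution (det0 _ c_le_ts) res_ge0.
have ts_c : ts = c.
  apply/eqP; rewrite eq_le c_le_ts andbT leNgt; apply/negP => c_lt_ts.
  pose t' := Num.max c (ts - d / 2).
  have Tt' : T t'.
    split; first by rewrite le_max lexx.
    by exists (resolvent1 ts); apply: supd; rewrite lt_max; apply/orP; right; lra.
  by have := ge_inf infT.2 Tt'; rewrite /t' le_max => /orP[]; lra.
have [vpos Av] : supersolution c (resolvent1 ts) by apply: supd; rewrite -ts_c; lra.
by exists (resolvent1 ts) => // i; apply: ltW.
Qed.

End Resolvent.

Section SpectralRadius.
Variables (R : realType) (n : nat) (A : 'M[R]_n).

Lemma normc_le_spectral_radius (l : R[i]) :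
  eigenvalue (map_mx (fun r => r%:C%C) A) l ->
  ComplexField.Normc.normc l <= spectral_radius A.
Proof.
move=> eig_l; pose M := map_mx (fun r : R => r%:C%C) A.
have [r Mfactor] := closed_field_poly_normal (char_poly M).
rewrite (monicP (char_poly_monic M)) scale1r in Mfactor.
have eig_in_r z : eigenvalue M z -> z \in r.
  by rewrite eigenvalue_root_char Mfactor root_prod_XsubC.
have normc_ge0 (z : R[i]) : 0 <= ComplexField.Normc.normc z.
  by case: z => ? ?; exact: sqrtr_ge0.
apply: sup_upper_bound; last by exists l.
split; first by exists (ComplexField.Normc.normc l), l.
exists (\sum_(z <- r) ComplexField.Normc.normc z) => _ [z /eig_in_r zr <-].
by rewrite (big_rem z) //= lerDl; apply: sumr_ge0.
Qed.

Lemma spectral_radius_det_neq0 (eta t : R) : spectral_radius A <= eta -> eta < t ->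
  \det (t%:M - A) != 0.
Proof.
move=> rho_le eta_lt; apply/negP => /eqP det0.
have : eigenvalue A t by rewrite eigenvalue_root_char /root horner_char_poly det0.
rewrite -(eigenvalue_map (real_complex R)) => /normc_le_spectral_radius.
rewrite /ComplexField.Normc.normc /= expr0n addr0 sqrtr_sqr => /le_trans/(_ rho_le).
by have := ler_norm t; lra.
Qed.

End SpectralRadius.

Section QuadraticForm.
Variable R : realFieldType.

Lemma ler_mul_amgm (x y u v : R) : 0 < u -> 0 < v ->
  x * y <= (v / u * x ^+ 2 + u / v * y ^+ 2) / 2.
Proof.
move=> u0 v0; have uv : 0 < u * v by apply: mulr_gt0.
have -> : (v / u * x ^+ 2 + u / v * y ^+ 2) / 2 =
   ((v * x - u * y) ^+ 2 + 2 * (u * v) * (x * y)) / (2 * (u * v)).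
  by field; rewrite !gt_eqF.
rewrite ler_pdivlMr ?mulr_gt0 //.
by have := sqr_ge0 (v * x - u * y); lra.
Qed.

(* Schur's test, through [x y <= (v j / v i * x^2 + v i / v j * y^2) / 2]. *)
Lemma quad_form_le_of_subeigenvector n (C Ps : 'I_n -> 'I_n -> R) (D v d : 'I_n -> R)
    (c : R) :
  (forall i j, C i j = C j i) -> (forall i j, `|C i j| <= D i * Ps i j) ->
  (forall i, 0 <= D i) -> (forall i, 0 < v i) ->
  (forall i, \sum_j Ps i j * v j <= c * v i) ->
  \sum_i \sum_j d i * d j * C i j <= c * \sum_i D i * d i ^+ 2.
Proof.
move=> Csym CD D_ge0 v_gt0 Psv.
pose T i j := `|C i j| * (v j / v i * d i ^+ 2).
have amgm : \sum_i \sum_j d i * d j * C i j <= \sum_i \sum_j (T i j + T j i) / 2.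
  apply: ler_sum => i _; apply: ler_sum => j _.
  apply: le_trans (_ : `|C i j| * (`|d i| * `|d j|) <= _).
    by rewrite mulrC; apply: le_trans (ler_norm _) _; rewrite !normrM.
  have := ler_mul_amgm `|d i| `|d j| (v_gt0 i) (v_gt0 j).
  rewrite !real_normK ?num_real // /T (Csym j i) -mulrDr => amgm_ij.
  by rewrite -mulrA ler_wpM2l.
have symmetrize : \sum_i \sum_j (T i j + T j i) / 2 = \sum_i \sum_j T i j.
  under eq_bigr do rewrite -mulr_suml big_split /=.
  by rewrite -mulr_suml big_split /= [X in (_ + X) / 2]exchange_big /=; field.
rewrite mulr_sumr; apply: le_trans amgm _; rewrite symmetrize; apply: ler_sum => i _.
have -> : c * (D i * d i ^+ 2) = D i * d i ^+ 2 / v i * (c * v i).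
  by field; rewrite gt_eqF.
have Dd_ge0 : 0 <= D i * d i ^+ 2 / v i.
  by rewrite divr_ge0 ?(ltW (v_gt0 i)) // mulr_ge0 ?sqr_ge0.
apply: le_trans _ (ler_wpM2l Dd_ge0 (Psv i)); rewrite mulr_sumr; apply: ler_sum => j _.
have -> : D i * d i ^+ 2 / v i * (Ps i j * v j) = D i * Ps i j * (v j / v i * d i ^+ 2).
  by field; rewrite gt_eqF.
by rewrite ler_wpM2r ?CD // mulr_ge0 ?sqr_ge0 // divr_ge0 // ltW.
Qed.

End QuadraticForm.

Section Expectation.
Variables (R : realType) (n : nat) (nu : cube n -> R).
Hypothesis nu_dist : is_distribution nu.

Definition expect (f : cube n -> R) := \sum_s nu s * f s.
Definition variance (f : cube n -> R) := expect (fun s => f s ^+ 2) - expect f ^+ 2.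
Definition up (i : 'I_n) (s : cube n) : R := (s i)%:R.
Definition covariance i j :=
  expect (fun s => up i s * up j s) - expect (up i) * expect (up j).

Lemma eq_expect f g : f =1 g -> expect f = expect g.
Proof. by move=> fg; apply: eq_bigr => s _; rewrite fg. Qed.

Lemma expect_sum (F : 'I_n -> cube n -> R) :
  expect (fun s => \sum_i F i s) = \sum_i expect (F i).
Proof. by rewrite /expect; under eq_bigr do rewrite mulr_sumr; exact: exchange_big. Qed.

Lemma expectZ k f : expect (fun s => k * f s) = k * expect f.
Proof. by rewrite /expect mulr_sumr; apply: eq_bigr => s _; rewrite mulrCA. Qed.

Lemma expectD f g : expect (fun s => f s + g s) = expect f + expect g.
Proof. by rewrite /expect -big_split; apply: eq_bigr => s _; rewrite mulrDr. Qed.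

Lemma expect_cst k : expect (fun=> k) = k.
Proof. by rewrite /expect -mulr_suml nu_dist.2 mul1r. Qed.

Lemma prob_expect (P : pred (cube n)) : prob nu P = expect (fun s => (P s)%:R).
Proof.
rewrite /prob /expect big_mkcond; apply: eq_bigr => s _.
by case: (P s); rewrite ?mulr1 ?mulr0.
Qed.

Lemma eq_prob (P Q : pred (cube n)) : P =1 Q -> prob nu P = prob nu Q.
Proof. exact: eq_bigl. Qed.

Lemma prob_ge0 (P : pred (cube n)) : 0 <= prob nu P.
Proof. by apply: sumr_ge0 => s _; exact: nu_dist.1. Qed.

Lemma probT : prob nu predT = 1.
Proof. exact: nu_dist.2. Qed.

Lemma prob_split (P Q : pred (cube n)) :
  prob nu P = prob nu (predI P Q) + prob nu (predI P (predC Q)).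
Proof.
rewrite !prob_expect -expectD; apply: eq_expect => s /=.
by case: (P s); case: (Q s); rewrite /= ?add0r ?addr0.
Qed.

Lemma probN (P : pred (cube n)) : prob nu (fun s => ~~ P s) = 1 - prob nu P.
Proof.
rewrite -probT (prob_split predT P) /=.
by rewrite (eq_prob (P := fun s => ~~ P s) (Q := predI predT (predC P))) //; ring.
Qed.

Lemma expect_up i : expect (up i) = prob nu (fun s => s i).
Proof. by rewrite prob_expect. Qed.

Lemma variance_shift (k : R) (f : cube n -> R) :
  variance (fun s => k + f s) = variance f.
Proof.
rewrite /variance (eq_expect (g := fun s => k ^+ 2 + (2 * k * f s + f s ^+ 2))).
  by rewrite !expectD !expect_cst expectZ; ring.
by move=> s; ring.
Qed.

Lemma variance_sum_coord (e : 'I_n -> bool -> R) :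
  variance (fun s => \sum_i e i (s i)) =
  \sum_i \sum_j (e i true - e i false) * (e j true - e j false) * covariance i j.
Proof.
pose d i := e i true - e i false.
have -> : (fun s : cube n => \sum_i e i (s i)) =
          (fun s => \sum_i e i false + \sum_i d i * up i s).
  apply/funext => s; rewrite -big_split; apply: eq_bigr => i _.
  by rewrite /d /up; case: (s i); rewrite /= ?mulr1 ?mulr0 ?addr0 // addrC subrK.
rewrite variance_shift /variance.
rewrite (eq_expect (g := fun s => \sum_i \sum_j d i * d j * (up i s * up j s))); last first.
  move=> s; rewrite expr2 mulr_suml; apply: eq_bigr => i _.
  by rewrite mulr_sumr; apply: eq_bigr => j _; ring.
rewrite expect_sum expect_sum expr2 mulr_suml -sumrB; apply: eq_bigr => i _.
rewrite expect_sum mulr_sumr -sumrB; apply: eq_bigr => j _.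
by rewrite !expectZ /covariance /d; ring.
Qed.

Lemma covariance_diag i : covariance i i = expect (up i) * (1 - expect (up i)).
Proof.
rewrite /covariance (eq_expect (g := up i)); first by ring.
by move=> s; rewrite /up; case: (s i); rewrite ?mulr1 ?mulr0.
Qed.

Lemma expect_up_ge0_le1 i : 0 <= expect (up i) <= 1.
Proof.
rewrite expect_up prob_ge0 -probT (prob_split predT (fun s => s i)) /=.
by rewrite (@eq_prob _ (fun s => s i)) // lerDl prob_ge0.
Qed.

Lemma covariance_diag_ge0 i : 0 <= covariance i i.
Proof. by rewrite covariance_diag; have := expect_up_ge0_le1 i; nra. Qed.

Lemma sum_covariance_diag_le (e : 'I_n -> bool -> R) :
  \sum_i covariance i i * (e i true - e i false) ^+ 2 <=
  expect (fun s => \sum_i e i (s i) ^+ 2).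
Proof.
rewrite expect_sum; apply: ler_sum => i _.
rewrite covariance_diag (eq_expect (f := fun s => e i (s i) ^+ 2)
  (g := fun s => e i false ^+ 2 +
     (2 * e i false * (e i true - e i false) + (e i true - e i false) ^+ 2) * up i s)).
2: by move=> s /=; rewrite /up; case: (s i); rewrite ?mulr1 ?mulr0 ?addr0 //; ring.
rewrite expectD expect_cst expectZ -subr_ge0.
set p := expect (up i); set a := e i false; set b := e i true.
(* the gap is the squared mean of [e i (s i)] *)
have -> : a ^+ 2 + (2 * a * (b - a) + (b - a) ^+ 2) * p - p * (1 - p) * (b - a) ^+ 2
          = (a + p * (b - a)) ^+ 2 by ring.
exact: sqr_ge0.
Qed.

End Expectation.
Arguments up {R n}.

Section Influence.
Variables (R : realType) (n : nat) (nu : cube n -> R).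
Hypothesis nu_dist : is_distribution nu.

Lemma dTV_boolE (f g : bool -> R) : f false = 1 - f true -> g false = 1 - g true ->
  dTV f g = `|f true - g true|.
Proof.
move=> f_false g_false; rewrite /dTV big_bool /= f_false g_false.
by rewrite (_ : 1 - _ - _ = - (f true - g true)) ?normrN; [lra | ring].
Qed.

Lemma cond_marginal_false (P : pred (cube n)) j : 0 < prob nu P ->
  cond_marginal nu P j false = 1 - cond_marginal nu P j true.
Proof.
move=> P_gt0; rewrite /cond_marginal.
have -> : prob nu (fun s => P s && (s j == false)) =
          prob nu P - prob nu (fun s => P s && (s j == true)).
  rewrite (prob_split nu P (fun s => s j == true)) /=.
  rewrite (@eq_prob _ _ _ (fun s => P s && (s j == false))
                          (fun s => P s && ~~ (s j == true))); first lra.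
  by move=> s; rewrite eqbF_neg eqb_id.
by field; rewrite gt_eqF.
Qed.

Lemma pin_set0E (t : cube n) i x : pin finset.set0 t i x =1 (fun s => s i == x).
Proof.
move=> s; rewrite /pin (_ : agree _ t s) //.
by apply/forallP => k; rewrite finset.in_set0.
Qed.

Lemma cond_marginal_pin_set0E (t : cube n) i x j :
  cond_marginal nu (pin finset.set0 t i x) j true =
  prob nu (fun s => (s i == x) && s j) / prob nu (fun s => s i == x).
Proof.
rewrite /cond_marginal (eq_prob nu (pin_set0E t i x)); congr (_ / _).
by apply: eq_prob => s; rewrite pin_set0E eqb_id.
Qed.

Lemma dTV_pin_le_influence (t : cube n) i j :
  0 < prob nu (fun s => s i == true) -> 0 < prob nu (fun s => s i == false) ->
  dTV (cond_marginal nu (pin finset.set0 t i true) j)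
      (cond_marginal nu (pin finset.set0 t i false) j)
    <= influence nu finset.set0 t i j.
Proof.
rewrite -!(eq_prob nu (pin_set0E t i _)) => pos_true pos_false.
by rewrite mxE (bigD1 true) //= (bigD1 false) //= !le_max lexx.
Qed.

Lemma covarianceE i j :
  covariance nu i j = prob nu (fun s => s i && s j) - prob nu (fun s => s i) *
    (prob nu (fun s => s i && s j) + prob nu (fun s => ~~ s i && s j)).
Proof.
rewrite /covariance !expect_up; congr (_ - _ * _).
  rewrite prob_expect; apply: eq_expect => s.
  by rewrite /up; case: (s i); case: (s j); rewrite ?mulr1 ?mulr0.
rewrite (prob_split nu (fun s => s j) (fun s => s i)).
by congr (_ + _); apply: eq_prob => s /=; rewrite andbC.
Qed.

Lemma covariance_le_influence (t : cube n) i j :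
  `|covariance nu i j| <= covariance nu i i * influence nu finset.set0 t i j.
Proof.
have infl_ge0 : 0 <= influence nu finset.set0 t i j by rewrite mxE bigmax_ge_id.
rewrite covarianceE covariance_diag // expect_up.
set p := prob nu (fun s => s i); set a := prob nu (fun s => s i && s j).
set q := prob nu (fun s => ~~ s i && s j).
have a_le_p : a <= p.
  by rewrite /p (prob_split nu _ (fun s => s j)) lerDl prob_ge0.
have q_le_1p : q <= 1 - p.
  by rewrite /p -(probN nu_dist) (prob_split nu _ (fun s => s j)) lerDl prob_ge0.
have a_ge0 : 0 <= a := prob_ge0 nu_dist _.
have q_ge0 : 0 <= q := prob_ge0 nu_dist _.
have [p0|p_ne0] := eqVneq p 0.
  by rewrite (_ : a = 0) ?p0; [rewrite !mul0r subrr normr0 | lra].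
have [p1|p_ne1] := eqVneq p 1.
  rewrite (_ : q = 0) ?p1; last lra.
  by rewrite subrr !(mul0r, mulr0, mul1r, addr0) subrr normr0.
have p_gt0 : 0 < p by rewrite lt_neqAle eq_sym p_ne0 prob_ge0.
have p_lt1 : 0 < 1 - p by rewrite subr_gt0 lt_neqAle p_ne1; lra.
have probT_i : prob nu (fun s => s i == true) = p by apply: eq_prob => s; rewrite eqb_id.
have probF_i : prob nu (fun s => s i == false) = 1 - p.
  by rewrite -(probN nu_dist); apply: eq_prob => s; rewrite eqbF_neg.
have cmT : cond_marginal nu (pin finset.set0 t i true) j true = a / p.
  rewrite cond_marginal_pin_set0E probT_i; congr (_ / _).
  by apply: eq_prob => s; rewrite eqb_id.
have cmF : cond_marginal nu (pin finset.set0 t i false) j true = q / (1 - p).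
  rewrite cond_marginal_pin_set0E probF_i; congr (_ / _).
  by apply: eq_prob => s; rewrite eqbF_neg.
have pin_pos x : 0 < prob nu (pin finset.set0 t i x).
  by rewrite (eq_prob nu (pin_set0E t i x)); case: x; rewrite ?probT_i ?probF_i.
have := @dTV_pin_le_influence t i j; rewrite probT_i probF_i => /(_ p_gt0 p_lt1).
rewrite dTV_boolE ?cond_marginal_false ?pin_pos // cmT cmF.
have -> : a - p * (a + q) = p * (1 - p) * (a / p - q / (1 - p)).
  by field; rewrite !gt_eqF.
have pq_ge0 : 0 <= p * (1 - p) by rewrite mulr_ge0 ?ltW.
by rewrite normrM ger0_norm //; apply: ler_wpM2l.
Qed.

End Influence.

Lemma variance_le_of_subeigenvector (R : realType) (n : nat) (nu : cube n -> R)
    (t : cube n) (c : R) (v : 'I_n -> R) :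
  is_distribution nu -> 0 <= c -> (forall i, 0 < v i) ->
  (forall i, \sum_j influence nu finset.set0 t i j * v j <= c * v i) ->
  forall e : 'I_n -> bool -> R,
  variance nu (fun s => \sum_i e i (s i)) <= c * expect nu (fun s => \sum_i e i (s i) ^+ 2).
Proof.
move=> nu_dist c_ge0 v_gt0 infl_v e.
rewrite variance_sum_coord //.
apply: le_trans _ (ler_wpM2l c_ge0 (sum_covariance_diag_le nu_dist e)).
apply: (@quad_form_le_of_subeigenvector _ _ _ (influence nu finset.set0 t)
  (fun i => covariance nu i i)) v_gt0 infl_v => [i j|i j|i].
- rewrite /covariance [X in _ - X]mulrC; congr (_ - _).
  by apply: eq_expect => s; rewrite mulrC.
- exact: covariance_le_influence.
- exact: covariance_diag_ge0.
Qed.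

Section ExternalFieldPath.
Variables (R : realType) (n : nat) (mu : cube n -> R) (al : R) (x : 'I_n -> R).
Hypotheses (mu_dist : is_distribution mu) (al_gt0 : 0 < al) (x_gt0 : forall i, 0 < x i).

Definition denom i := marginal mu i true * x i + marginal mu i false.

Definition dir i (b : bool) := if b then x i / denom i - 1 else (denom i)^-1 - 1.

Let a (s : cube n) i := dir i (s i).

Lemma marginal_false i : marginal mu i false = 1 - marginal mu i true.
Proof.
by rewrite /marginal -(probN mu_dist); apply: eq_prob => s; case: (s i).
Qed.

Lemma expect_up_marginal i : expect mu (up i) = marginal mu i true.
Proof. by rewrite expect_up; apply: eq_prob => s; rewrite eqb_id. Qed.

Lemma denom_gt0 i : 0 < denom i.
Proof.
rewrite /denom marginal_false.
have := expect_up_ge0_le1 mu_dist i; rewrite expect_up_marginal => /andP[m0 m1].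
have xi := x_gt0 i.
have [->|m_ne1] := eqVneq (marginal mu i true) 1; first by rewrite mul1r subrr addr0.
have m_lt1 : marginal mu i true < 1 by rewrite lt_neqAle m_ne1.
by have := mulr_ge0 m0 (ltW xi); lra.
Qed.

Lemma dir_gtN1 i b : -1 < dir i b.
Proof.
have d_gt0 := denom_gt0 i.
case: b => /=; first by have := divr_gt0 (x_gt0 i) d_gt0; lra.
have : 0 < (denom i)^-1 by rewrite invr_gt0.
lra.
Qed.

Lemma dir_centred : \sum_s mu s * \sum_i a s i = 0.
Proof.
rewrite -/(expect mu _) expect_sum //; apply: big1 => i _.
rewrite (eq_expect mu (g := fun s => dir i false + (dir i true - dir i false) * up i s)).
2: by move=> s; rewrite /a /up; case: (s i); rewrite /= ?mulr1 ?mulr0 ?addr0 //; ring.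
rewrite expectD // expect_cst // expectZ expect_up_marginal /dir.
have := denom_gt0 i; rewrite /denom marginal_false => d_gt0.
by field; rewrite gt_eqF.
Qed.

(* the external field [lambda] whose tilt of [mu] is the path measure at time [t] *)
Definition field t i :=
  expR (al * (ln (1 + t * dir i true) - ln (1 + t * dir i false))).
Definition field_norm t := expR (al * \sum_i ln (1 + t * dir i false)).

Lemma path_term_field s t :
  path_term a al s t = field_norm t * \prod_(i | s i) field t i.
Proof.
rewrite /path_term /field_norm /field -expR_sum -expRD; congr expR.
rewrite [X in _ = _ + X]big_mkcond /= !mulr_sumr -big_split /=; apply: eq_bigr => i _.
by rewrite /a; case: (s i) => /=; ring.
Qed.

Lemma gen_poly_field t : gen_poly mu (field t) = path_Z mu a al t / field_norm t.
Proof.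
rewrite /gen_poly /path_Z mulr_suml; apply: eq_bigr => s _.
by rewrite path_term_field; field; rewrite gt_eqF // expR_gt0.
Qed.

Lemma path_Z_field_gt0 t : 0 < path_Z mu a al t.
Proof. by apply: path_Z_gt0; [exact: mu_dist.1 | rewrite mu_dist.2]. Qed.

Lemma tilt_fieldE t s :
  tilt (field t) mu s = mu s * path_term a al s t / path_Z mu a al t.
Proof.
rewrite /tilt gen_poly_field path_term_field.
have := expR_gt0 (al * \sum_i ln (1 + t * dir i false)); have := path_Z_field_gt0 t.
by move=> Z_gt0 norm_gt0; field; rewrite !gt_eqF.
Qed.

Lemma tilt_field_dist t : is_distribution (tilt (field t) mu).
Proof.
have Z_gt0 := path_Z_field_gt0 t; split=> [s|].
  by rewrite tilt_fieldE divr_ge0 ?mulr_ge0 ?mu_dist.1 ?ltW ?expR_gt0.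
under eq_bigr do rewrite tilt_fieldE.
by rewrite -mulr_suml divff // gt_eqF.
Qed.

Lemma expect_tilt_field t (f : cube n -> R) : expect (tilt (field t) mu) f =
  (\sum_s mu s * (path_term a al s t * f s)) / path_Z mu a al t.
Proof.
rewrite /expect mulr_suml; apply: eq_bigr => s _; rewrite tilt_fieldE.
by field; rewrite gt_eqF // path_Z_field_gt0.
Qed.

Lemma field_le (eps t : R) i : 0 <= eps -> 0 <= t <= 1 ->
  x i <= (1 + eps) `^ al^-1 -> field t i <= 1 + eps.
Proof.
move=> eps_ge0 t01 x_le.
have u_gt0 := weight_gt0 (dir_gtN1 i true) t01.
have w_gt0 := weight_gt0 (dir_gtN1 i false) t01.
set u := 1 + t * dir i true in u_gt0 *; set w := 1 + t * dir i false in w_gt0 *.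
have xi := x_gt0 i; have di := denom_gt0 i.
have eps1_gt0 : 0 < 1 + eps by lra.
have al_lnx : al * ln (x i) <= ln (1 + eps).
  move: x_le; rewrite -ler_ln ?posrE ?powR_gt0 // ln_powR.
  by rewrite -(ler_pM2l al_gt0) mulrA mulfV ?gt_eqF // mul1r.
have max_gt0 : 0 < Num.max 1 (x i) by rewrite lt_max ltr01.
have u_le : u <= Num.max 1 (x i) * w.
  rewrite /u /w /dir; have [x_ge1|x_lt1] := leP 1 (x i).
    rewrite -subr_ge0.
    have -> : x i * (1 + t * ((denom i)^-1 - 1)) - (1 + t * (x i / denom i - 1))
              = (x i - 1) * (1 - t) by ring.
    by rewrite mulr_ge0 // subr_ge0; [lra | case/andP: t01].
  rewrite mul1r lerD2l ler_wpM2l //; first by case/andP: t01.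
  by rewrite lerD2r ler_pdivrMr // mulVf ?gt_eqF // ltW.
have max_le : al * ln (Num.max 1 (x i)) <= ln (1 + eps).
  have [//|x_lt1] := leP 1 (x i).
  by rewrite ln1 mulr0 ln_ge0 //; lra.
rewrite /field -[X in _ <= X]lnK ?posrE // ler_expR; apply: le_trans max_le.
rewrite ler_pM2l // lerBlDr -lnM ?posrE // ler_ln ?posrE ?mulr_gt0 //.
Qed.

Lemma path_variance_bound (eta eps : R) :
  completely_spectrally_independent mu eta eps -> eta < al^-1 -> 0 <= eps ->
  (forall i, x i <= (1 + eps) `^ al^-1) -> forall t, 0 <= t <= 1 ->
  al * (path_M mu a al t * path_Z mu a al t - path_N mu a al t ^+ 2)
    <= path_V mu a al t * path_Z mu a al t.
Proof.
move=> csi eta_lt eps_ge0 x_le t t01.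
have nu_dist := tilt_field_dist t.
pose t0 : cube n := [ffun=> false].
pose Psi := influence (tilt (field t) mu) finset.set0 t0.
have rho_le : spectral_radius Psi <= eta.
  apply: csi => [i|]; first by rewrite expR_gt0 field_le.
  rewrite (eq_prob _ (Q := predT)) ?probT // => s.
  by apply/forallP => k; rewrite finset.in_set0.
have Psi_ge0 i j : 0 <= Psi i j by rewrite mxE bigmax_ge_id.
have [v v_gt0 Psi_v] : exists2 v : 'I_n -> R, forall i, 0 < v i &
    forall i, \sum_j Psi i j * v j <= al^-1 * v i.
  apply: (@nonneg_mx_subeigenvector _ _ Psi Psi_ge0) => s al_le_s.
  exact: spectral_radius_det_neq0 rho_le (lt_le_trans eta_lt al_le_s).
have al_inv_ge0 : 0 <= al^-1 by rewrite invr_ge0 ltW.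
have := variance_le_of_subeigenvector nu_dist al_inv_ge0 v_gt0 Psi_v
  (fun i b => dir i b / (1 + t * dir i b)).
rewrite /variance !expect_tilt_field.
set M := path_M mu a al t; set N := path_N mu a al t; set V := path_V mu a al t.
set Z := path_Z mu a al t; have Z_gt0 : 0 < Z := path_Z_field_gt0 t.
change (M / Z - (N / Z) ^+ 2 <= al^-1 * (V / Z) -> al * (M * Z - N ^+ 2) <= V * Z).
have -> : al * (M * Z - N ^+ 2) = al * Z ^+ 2 * (M / Z - (N / Z) ^+ 2).
  by field; rewrite gt_eqF.
have -> : V * Z = al * Z ^+ 2 * (al^-1 * (V / Z)) by field; rewrite !gt_eqF.
by apply: ler_wpM2l; rewrite ltW // mulr_gt0 // exprn_gt0.
Qed.

Lemma path_Z0 : path_Z mu a al 0 = 1.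
Proof.
rewrite -[RHS]mu_dist.2; apply: eq_bigr => s _; rewrite /path_term.
by rewrite big1 ?mulr0 ?expR0 ?mulr1 // => i _; rewrite mul0r addr0 ln1.
Qed.

Lemma field1 i : field 1 i = x i `^ al.
Proof.
have xi := x_gt0 i; have di := denom_gt0 i.
rewrite /field /dir !mul1r !(addrC 1) !subrK.
by rewrite lnM ?posrE ?invr_gt0 // addrK /powR gt_eqF.
Qed.

Lemma field_norm1 : field_norm 1 = expR (- (al * \sum_i ln (denom i))).
Proof.
rewrite /field_norm -mulrN -sumrN; congr (expR (_ * _)); apply: eq_bigr => i _.
by rewrite /dir mul1r (addrC 1) subrK lnV // posrE denom_gt0.
Qed.

Lemma F_fun_le1 (eta eps : R) :
  completely_spectrally_independent mu eta eps -> eta < al^-1 -> 0 <= eps ->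
  (forall i, x i <= (1 + eps) `^ al^-1) -> F_fun mu al x <= 1.
Proof.
move=> csi eta_lt eps_ge0 x_le.
have Z1_le1 : path_Z mu a al 1 <= 1.
  rewrite -[X in _ <= X]path_Z0; apply: (path_Z_nincr mu_dist.1 _ al_gt0).
  - by rewrite mu_dist.2.
  - by move=> s i; exact: dir_gtN1.
  - by rewrite dir_centred.
  - exact: path_variance_bound csi eta_lt eps_ge0 x_le.
set S := \sum_i ln (denom i).
have G_le : gen_poly mu (fun i => x i `^ al) <= expR (al * S).
  have -> : gen_poly mu (fun i => x i `^ al) = gen_poly mu (field 1).
    by apply: eq_bigr => s _; congr (_ * _); apply: eq_bigr => i _; rewrite field1.
  rewrite gen_poly_field field_norm1 ler_pdivrMr ?expR_gt0 //.
  by rewrite -expRD addrN expR0.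
have G_ge0 : 0 <= gen_poly mu (fun i => x i `^ al).
  apply: sumr_ge0 => s _; rewrite mulr_ge0 ?mu_dist.1 //.
  by apply: prodr_ge0 => i _; exact: powR_ge0.
have denomE : \prod_i (marginal mu i true * x i + marginal mu i false) = expR S.
  by rewrite /S expR_sum; apply: eq_bigr => i _; rewrite lnK // posrE denom_gt0.
rewrite /F_fun denomE ler_pdivrMr ?expR_gt0 // mul1r.
have al_inv_ge0 : 0 <= al^-1 by rewrite invr_ge0 ltW.
apply: le_trans (ge0_ler_powR al_inv_ge0 _ _ G_le) _; rewrite ?nnegrE ?expR_ge0 //.
by rewrite /powR gt_eqF ?expR_gt0 // expRK mulrA mulVf ?gt_eqF // mul1r.
Qed.

End ExternalFieldPath.

Unset Implicit Arguments.

Theorem lemma5p2 (R : realType) (n : nat) (eta eps : R) (mu : cube n -> R) :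
  1 < eta -> 0 < eps -> is_distribution mu ->
  completely_spectrally_independent mu eta eps ->
  forall alpha : R, 0 < alpha -> alpha <= (2 * eta)^-1 ->
  forall x : 'I_n -> R, (forall i, 0 < x i <= (1 + eps) `^ (alpha^-1)) ->
  F_fun mu alpha x <= 1.
Proof.
move=> eta_gt1 eps_gt0 mu_dist csi alpha alpha_gt0 alpha_le x x_bounds.
have eta_lt : eta < alpha^-1.
  have : 2 * eta <= alpha^-1 by rewrite -[2 * eta]invrK lef_pV2 ?posrE ?invr_gt0 //; lra.
  lra.
have x_gt0 i : 0 < x i by case/andP: (x_bounds i).
have x_le i : x i <= (1 + eps) `^ alpha^-1 by case/andP: (x_bounds i).
exact: (F_fun_le1 mu_dist alpha_gt0 x_gt0 csi eta_lt (ltW eps_gt0) x_le).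
Qed.
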